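(* For $n\ge2$ and $u_1,\dots,u_n\in\mathcal B$, $\langle X(u_1)\cdots X(u_n)\Omega,\Omega\rangle_{\gamma,\phi}=\sum_{\pi\in\mathrm{NC}_{ns}(n)}\langle W_M(\pi)\Omega,\Omega\rangle_{\gamma,\phi}$, and for $n=1$, $\langle X(u_1)\Omega,\Omega\rangle_{\gamma,\phi}=0$.
   Context: Let $\mathcal B$ be a unital $*$-algebra with star-linear maps $\phi:\mathcal B\to\mathbb C$, $\gamma:\mathcal B\to\mathcal B$, $\Lambda:\mathcal B\otimes_{alg}\mathcal B\to\mathcal B$, where $\phi$ is positive and faithful and $\gamma+\phi$ is completely positive, with $(\gamma+\phi)[b]:=\gamma[b]+\phi[b]1_{\mathcal B}$. Assume $\phi[v^*\Lambda(b\otimes u)]=\phi[\Lambda(b^*\otimes v)^*u]$ and $\gamma[v^*\Lambda(b\otimes u)]=\gamma[\Lambda(b^*\otimes v)^*u]$ for all $b,u,v$. On $\mathcal F_{alg}(\mathcal B)=\mathbb C\Omega\oplus\bigoplus_{n\ge1}\mathcal B^{\otimes n}$ use the form $\langle\Omega,\Omega\rangle_{\gamma,\phi}=1$, $\langle u_1\otimes\cdots\otimes u_n,v_1\otimes\cdots\otimes v_k\rangle_{\gamma,\phi}=\delta_{n=k}\phi[v_n^*(\gamma+\phi)[v_{n-1}^*\cdots(\gamma+\phi)[v_1^*u_1]\cdots u_{n-1}]u_n]$. For $b\in\mathcal B$ define operators on $\mathcal F_{alg}(\mathcal B)$: $a^+(b)\Omega=b$, $a^+(b)(u_1\otimes\cdots\otimes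 u_n)=b\otimes u_1\otimes\cdots\otimes u_n$; $a^-(b)\Omega=0$, $a^-(b)u_1=\phi[bu_1]\Omega$, $a^-(b)(u_1\otimes\cdots\otimes u_n)=(\gamma+\phi)[bu_1]u_2\otimes\cdots\otimes u_n$ for $n\ge2$; $a^0(b)\Omega=0$, $a^0(b)(u_1\otimes\cdots\otimes u_n)=\Lambda(b\otimes u_1)\otimes u_2\otimes\cdots\otimes u_n$; and $X(b)=a^+(b)+a^-(b)+a^0(b)$. $\mathrm{NC}(n)$ is the set of noncrossing partitions of $\{1,\dots,n\}$; $\mathrm{NC}_{ns}(n)$ those with no singleton blocks. In a block, the smallest element is opening, the largest closing, others middle. For $\pi\in\mathrm{NC}_{ns}(n)$, $W_M(\pi)=a_1(u_1)a_2(u_2)\cdots a_n(u_n)$ where $a_i=a^-$ if $i$ is opening, $a^+$ if $i$ is closing, $a^0$ if $i$ is middle. *)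

From HB Require Import structures.
From mathcomp Require Import all_boot all_order all_algebra.
From mathcomp Require Import complex Rstruct.
Set Implicit Arguments.
Unset Strict Implicit.
Unset Printing Implicit Defensive.
Import Order.TTheory GRing.Theory Num.Theory.
Local Open Scope ring_scope.

Definition CC : numClosedFieldType := (Rdefinitions.R)[i].

Section FockSpace.

Variable B : algType CC.

Definition is_star (star : B -> B) : Prop :=
  [/\ involutive star,
      forall a b : B, star (a + b) = star a + star b,
      forall (c : CC) (b : B), star (c *: b) = (c^*)%C *: star b
    & forall a b : B, star (a * b) = star b * star a].

Definition star_linear_functional (star : B -> B) (phi : B -> CC) : Prop :=
  [/\ forall a b, phi (a + b) = phi a + phi b,
      forall (c : CC) b, phi (c *: b) = c * phi b
    & forall b, phi (star b) = (phi b)^*%C].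

Definition star_linear_map (star : B -> B) (g : B -> B) : Prop :=
  [/\ forall a b, g (a + b) = g a + g b,
      forall (c : CC) b, g (c *: b) = c *: g b
    & forall b, g (star b) = star (g b)].

(* A linear map Lambda : B (x)_alg B -> B is the same as a bilinear map
   B -> B -> B; star on B (x) B is (b (x) u)^* = b^* (x) u^*. *)
Definition star_bilinear_map (star : B -> B) (Lam : B -> B -> B) : Prop :=
  [/\ forall a a' u, Lam (a + a') u = Lam a u + Lam a' u,
      forall a u u', Lam a (u + u') = Lam a u + Lam a u',
      forall (c : CC) a u, Lam (c *: a) u = c *: Lam a u,
      forall (c : CC) a u, Lam a (c *: u) = c *: Lam a u
    & forall a u, Lam (star a) (star u) = star (Lam a u)].

Definition positive_functional (star : B -> B) (phi : B -> CC) : Prop :=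
  forall b, 0 <= phi (star b * b).

Definition faithful_functional (star : B -> B) (phi : B -> CC) : Prop :=
  forall b, phi (star b * b) = 0 -> b = 0.

Definition mxstar (star : B -> B) m (X : 'M[B]_m) : 'M[B]_m :=
  \matrix_(i, j) star (X j i).

Definition positive_mx (star : B -> B) m (A : 'M[B]_m) : Prop :=
  exists s : seq 'M[B]_m, A = \sum_(X <- s) (mxstar star X *m X).

Definition completely_positive (star : B -> B) (Psi : B -> B) : Prop :=
  forall m (A : 'M[B]_m), positive_mx star A -> positive_mx star (map_mx Psi A).

(* (gamma + phi)[b] := gamma[b] + phi[b] 1_B *)
Definition gpp (gamma : B -> B) (phi : B -> CC) (b : B) : B :=
  gamma b + phi b *: 1.

(* ---------- the algebraic full Fock space ----------
   An element of F_alg(B) is represented as a formal finite linear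
   combination of words: the word [::] is Omega, the word [:: u1; ...; un]
   is the elementary tensor u1 (x) ... (x) un.  All operators and the form
   are defined on words and extended (sesqui)linearly. *)
Definition fvec := seq (CC * seq B).

Definition Omega : fvec := [:: (1, [::])].

(* the form on two words of equal length n >= 1:
   phi[v_n^* (g+p)[v_{n-1}^* ... (g+p)[v_1^* u_1] ... u_{n-1}] u_n] *)
Fixpoint form_acc (star : B -> B) (gamma : B -> B) (phi : B -> CC)
    (acc : B) (us vs : seq B) : CC :=
  match us, vs with
  | u :: us', v :: vs' =>
      form_acc star gamma phi (star v * gpp gamma phi acc * u) us' vs'
  | _, _ => phi acc
  end.

Definition form_word (star : B -> B) (gamma : B -> B) (phi : B -> CC)
    (us vs : seq B) : CC :=
  if size us != size vs then 0 else
  match us, vs with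
  | u :: us', v :: vs' => form_acc star gamma phi (star v * u) us' vs'
  | _, _ => 1
  end.

(* <xi, eta>_{gamma,phi}, linear in xi, conjugate linear in eta *)
Definition fock_form (star : B -> B) (gamma : B -> B) (phi : B -> CC)
    (xi eta : fvec) : CC :=
  \sum_(p <- xi) \sum_(q <- eta) p.1 * (q.1)^*%C * form_word star gamma phi p.2 q.2.

Definition lin_ext (op : seq B -> fvec) (xi : fvec) : fvec :=
  flatten [seq [seq (p.1 * q.1, q.2) | q <- op p.2] | p <- xi].

Definition aplus (b : B) (w : seq B) : fvec := [:: (1, b :: w)].

Definition aminus (gamma : B -> B) (phi : B -> CC) (b : B) (w : seq B) : fvec :=
  match w with
  | [::] => [::]
  | [:: u1] => [:: (phi (b * u1), [::])]
  | u1 :: u2 :: rest => [:: (1, (gpp gamma phi (b * u1) * u2) :: rest)]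
  end.

Definition azero (Lam : B -> B -> B) (b : B) (w : seq B) : fvec :=
  match w with
  | [::] => [::]
  | u1 :: rest => [:: (1, Lam b u1 :: rest)]
  end.

Definition Xop gamma phi Lam (b : B) (w : seq B) : fvec :=
  aplus b w ++ aminus gamma phi b w ++ azero Lam b w.

Definition Xprod gamma phi Lam n (u : 'I_n -> B) : fvec :=
  foldr (fun i xi => lin_ext (Xop gamma phi Lam (u i)) xi) Omega (enum 'I_n).

End FockSpace.
Arguments Omega {B}.

Section NC.

Variable n : nat.

Definition noncrossing (P : {set {set 'I_n}}) : bool :=
  [forall B1 in P, forall B2 in P, (B1 != B2) ==>
     ~~ [exists a : 'I_n, exists b : 'I_n, exists c : 'I_n, exists d : 'I_n,
          [&& (a < b)%N, (b < c)%N, (c < d)%N,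
              a \in B1, c \in B1, b \in B2 & d \in B2]]].

Definition no_singleton (P : {set {set 'I_n}}) : bool :=
  [forall B1 in P, (1 < #|B1|)%N].

(* NC(n): noncrossing partitions of {1..n} (here indexed by 'I_n);
   NC_ns(n): those without singleton blocks *)
Definition is_NC (P : {set {set 'I_n}}) : bool :=
  partition P [set: 'I_n] && noncrossing P.

Definition is_NCns (P : {set {set 'I_n}}) : bool :=
  is_NC P && no_singleton P.

Definition is_opening (P : {set {set 'I_n}}) (i : 'I_n) : bool :=
  [forall j in pblock P i, (i <= j)%N].

Definition is_closing (P : {set {set 'I_n}}) (i : 'I_n) : bool :=
  [forall j in pblock P i, (j <= i)%N].

End NC.

Definition WM_Omega (B : algType CC) (gamma : B -> B) (phi : B -> CC)
    (Lam : B -> B -> B) n (P : {set {set 'I_n}}) (u : 'I_n -> B) : fvec B :=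
  foldr (fun i xi =>
           lin_ext (if is_opening P i then aminus gamma phi (u i)
                    else if is_closing P i then aplus (u i)
                    else azero Lam (u i)) xi)
        (@Omega B) (enum 'I_n).

From HB Require Import structures.
From mathcomp Require Import all_boot all_order all_algebra.
From mathcomp Require Import complex Rstruct zify.
Import Order.TTheory GRing.Theory Num.Theory.
Set Implicit Arguments.
Unset Strict Implicit.
Unset Printing Implicit Defensive.

(* Expanding every X(u_i) = a^-(u_i) + a^+(u_i) + a^0(u_i) writes
   X(u_1)...X(u_n)Omega as a sum of 3^n terms, one for each word of kinds.
   Each term is a combination of tensors of one common length, so its vacuum
   coefficient vanishes unless the word, applied from the right, never lets
   a^- or a^0 act on a tensor too short for it and ends at length 0: read
   from the left it is a Motzkin path with no flat step at level 0.  These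
   paths are exactly the opening/closing/middle labellings of the partitions
   in NC_ns(n); a path gives back its partition by sending every non-opening
   point to the last earlier point at a lower level. *)

Inductive kind := Open | Close | Middle.

Definition nat_of_kind (k : kind) : nat :=
  match k with Open => 0 | Close => 1 | Middle => 2 end.

Definition kind_of_nat (m : nat) : option kind :=
  match m with 0 => Some Open | 1 => Some Close | 2 => Some Middle | _ => None end.

Lemma nat_of_kindK : pcancel nat_of_kind kind_of_nat. Proof. by case. Qed.

HB.instance Definition _ := Countable.copy kind (pcan_type nat_of_kindK).

Lemma kind_enumP : Finite.axiom [:: Open; Close; Middle]. Proof. by case. Qed.

HB.instance Definition _ := isFinite.Build kind kind_enumP.

Lemma sum_kind (R : nmodType) (F : kind -> R) :
  (\sum_k F k = F Open + F Close + F Middle)%R.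
Proof. by rewrite /index_enum !unlock /= addr0 addrA. Qed.

(* [Open], [Close] and [Middle] stand for a^-, a^+ and a^0.  A sequence of
   kinds lists such operators from left to right, so the rightmost one acts
   first on Omega; [depth ks] is the length of the resulting tensors and
   [admissible ks] says that no a^- or a^0 meets a tensor too short for it. *)
Definition kind_shift (k : kind) : int :=
  match k with Open => -1 | Close => 1 | Middle => 0 end.

Fixpoint depth (ks : seq kind) : int :=
  if ks is k :: ks' then (kind_shift k + depth ks')%R else 0%R.

Fixpoint admissible (ks : seq kind) : bool :=
  if ks is k :: ks' then admissible ks' && ((k != Close) ==> (0 < depth ks')%R)
  else true.

Definition vacuum_path (ks : seq kind) : bool := admissible ks && (depth ks == 0%R).

Lemma admissible_drop j ks : admissible ks -> admissible (drop j ks).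
Proof. by elim: ks j => [|k ks IH] [|j] //= /andP [/IH]. Qed.

Lemma admissible_depth_ge0 ks : admissible ks -> (0 <= depth ks)%R.
Proof. by elim: ks => [|k ks IH] //= /andP [/IH]; case: k => /=; lia. Qed.

Definition block_kind n (P : {set {set 'I_n}}) (i : 'I_n) : kind :=
  if is_opening P i then Open else if is_closing P i then Close else Middle.

Section VacuumPathPartition.

Variables (n : nat) (c : 'I_n -> kind).
Local Notation ks := (map c (enum 'I_n)).
Hypothesis c_vacuum : vacuum_path ks.

Lemma size_kinds : size ks = n.
Proof. by rewrite size_map size_enum_ord. Qed.

Definition level (j : nat) : int := depth (drop j ks).

Lemma level0 : level 0 = 0%R.
Proof. by case/andP: c_vacuum => _ /eqP; rewrite /level drop0. Qed.

Lemma level_size : level n = 0%R.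
Proof. by rewrite /level drop_oversize ?size_kinds. Qed.

Lemma drop_kinds (i : 'I_n) : drop i ks = c i :: drop i.+1 ks.
Proof.
rewrite (drop_nth Open) ?size_kinds //; congr (_ :: _).
by rewrite (nth_map i) ?size_enum_ord // nth_ord_enum.
Qed.

Lemma levelS (i : 'I_n) : level i = (kind_shift (c i) + level i.+1)%R.
Proof. by rewrite /level drop_kinds. Qed.

Lemma level_ge0 j : (0 <= level j)%R.
Proof. exact/admissible_depth_ge0/admissible_drop/(andP c_vacuum).1. Qed.

Lemma level_succ_gt0 (i : 'I_n) : c i != Close -> (0 < level i.+1)%R.
Proof.
have := admissible_drop i (andP c_vacuum).1.
by rewrite drop_kinds /= => /andP [_ /implyP].
Qed.

Lemma level_gt0 (i : 'I_n) : c i != Open -> (0 < level i)%R.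
Proof.
move=> Hi; have := levelS i; have := level_ge0 i.+1; have := @level_succ_gt0 i.
case: (c i) Hi => // _ /=; first by move=> _; lia.
by move=> /(_ isT); lia.
Qed.

(* The opener of a non-opening position j is the last earlier position at a
   lower level: the opening of the block of j. *)
Definition opener (j : 'I_n) : 'I_n :=
  if c j == Open then j else insubd j (\max_(k < j | (level k < level j)%R) k).

Lemma opener_Open (j : 'I_n) : c j = Open -> opener j = j.
Proof. by rewrite /opener => ->. Qed.

Lemma openerP (j : 'I_n) : c j != Open ->
  [/\ opener j < j, (level (opener j) < level j)%R &
      forall k, opener j < k -> k <= j -> (level j <= level k)%R].
Proof.
move=> Hj; have lj := level_gt0 Hj.
have j_gt0 : 0 < j by case: (posnP j) lj => [->|//]; rewrite level0.
have : 0 < #|[pred k : 'I_j | (level k < level j)%R]|.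
  by apply/card_gt0P; exists (Ordinal j_gt0); rewrite inE /= level0.
move=> /(eq_bigmax_cond (@nat_of_ord j)) [k0 k0_lt Ek0].
have {}Ek0 : \max_(k < j | (level k < level j)%R) k = k0 := Ek0.
have Eo : opener j = k0 :> nat.
  by rewrite /opener (negbTE Hj) val_insubd Ek0 (ltn_trans (ltn_ord k0)).
rewrite Eo; split=> [|//|k k0k kj]; first exact: ltn_ord.
rewrite leNgt; apply/negP => lt_k.
have kj' : k < j by rewrite ltn_neqAle kj andbT; apply: contraTneq lt_k => ->; lia.
have : Ordinal kj' <= \max_(k < j | (level k < level j)%R) k.
  exact: (@leq_bigmax_cond _ [pred k : 'I_j | (level k < level j)%R] _ (Ordinal kj')).
by rewrite Ek0 /=; lia.
Qed.

Lemma opener_kind (j : 'I_n) : c j != Open ->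
  c (opener j) = Open /\ level j = (level (opener j) + 1)%R.
Proof.
move=> Hj; have [oj lo min_o] := openerP Hj.
have := levelS (opener j); have := min_o _ (ltnSn _) oj.
by case: (c (opener j)) => /=; [split=> //; lia | lia | lia].
Qed.

Lemma opener_le (j : 'I_n) : opener j <= j.
Proof.
by have [/opener_Open -> //|/openerP [/ltnW]] := eqVneq (c j) Open.
Qed.

Lemma opener_lt_notOpen (j : 'I_n) : opener j < j -> c j != Open.
Proof. by apply: contraTneq => /opener_Open ->; rewrite ltnn. Qed.

Lemma opener_idem (j : 'I_n) : opener (opener j) = opener j.
Proof.
have [/opener_Open Eo|/opener_kind [/opener_Open Eo _]] := eqVneq (c j) Open.
  by rewrite !Eo.
by rewrite Eo.
Qed.

Lemma opener_unique (j : 'I_n) (a : nat) : c j != Open -> a < j ->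
    (level a < level j)%R -> (forall k, a < k -> k <= j -> (level j <= level k)%R) ->
  opener j = a :> nat.
Proof.
move=> Hj aj la min_a; have [oj lo min_o] := openerP Hj.
case: (ltngtP a (opener j)) => [lt|lt|//].
  by have := min_a (opener j) lt (ltnW oj); lia.
by have := min_o a lt (ltnW aj); lia.
Qed.

Lemma level_above_opener (i : 'I_n) : c i != Close ->
  level i.+1 = (level (opener i) + 1)%R /\
  forall k, opener i < k -> k <= i.+1 -> (level (opener i) + 1 <= level k)%R.
Proof.
move=> Hi; have := levelS i.
have [Ho|Hno] := eqVneq (c i) Open.
  rewrite opener_Open // Ho /= => Ei; split=> [|k ik ki]; first lia.
  have -> : k = i.+1 by lia.
  lia.
have [oi _ min_o] := openerP Hno; have [_ Eo] := opener_kind Hno.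
case: (c i) Hi Hno => //= _ _ Ei; split=> [|k ok ki]; first lia.
case: (ltngtP k i.+1) => [lt|gt|->]; last lia; last lia.
by have := min_o k ok lt; lia.
Qed.

Lemma exists_later_same_opener (i : 'I_n) : c i != Close ->
  exists2 j : 'I_n, i < j & opener j = opener i.
Proof.
move=> Hi; have [Ei above] := level_above_opener Hi.
have exm : exists m, (i < m) && (level m <= level (opener i))%R.
  by exists n; rewrite ltn_ord level_size level_ge0.
have [m /andP [im lm] min_m] := ex_minnP exm.
have im1 : i.+1 < m.
  by rewrite ltn_neqAle im andbT; apply: contraTneq lm => <-; rewrite Ei; lia.
have mn : m <= n by apply: min_m; rewrite ltn_ord level_size level_ge0.
have lJ : (level (opener i) + 1 <= level m.-1)%R.
  rewrite leNgt; apply/negP => lt_J.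
  have : m <= m.-1 by apply: min_m; apply/andP; split; lia.
  lia.
have Jn : m.-1 < n by lia.
have := levelS (Ordinal Jn); rewrite /= prednK; last lia.
case EJ : (c (Ordinal Jn)) => /= lm'; [lia | | lia].
exists (Ordinal Jn); first by rewrite /=; lia.
apply/val_inj/opener_unique => /=; first by rewrite EJ.
- by have := opener_le i; lia.
- lia.
move=> k ok kJ; case: (leqP k i.+1) => ki; first by have := above k ok ki; lia.
rewrite leNgt; apply/negP => lt_k.
have : m <= k by apply: min_m; apply/andP; split; lia.
lia.
Qed.

Lemma opener_level_lt (j : 'I_n) (k : nat) : c j != Open ->
  opener j < k -> k <= j -> (level (opener j) < level k)%R.
Proof.
move=> Hj ok kj; have [_ _ /(_ k ok kj)] := openerP Hj.
by have [_ ->] := opener_kind Hj; lia.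
Qed.

Definition opener_partition : {set {set 'I_n}} := preim_partition opener [set: 'I_n].

Lemma opener_partitionP : partition opener_partition [set: 'I_n].
Proof. exact: preim_partitionP. Qed.

Lemma mem_opener_block (x y : 'I_n) :
  (y \in pblock opener_partition x) = (opener x == opener y).
Proof. by apply: pblock_equivalence_partition => // ? ? ? _ _ _; split=> // /eqP ->. Qed.

Lemma is_opening_opener_partition (i : 'I_n) :
  is_opening opener_partition i = (c i == Open).
Proof.
apply/forall_inP/eqP => [Hi|/opener_Open Eo j]; last first.
  by rewrite mem_opener_block Eo => /eqP ->; exact: opener_le.
apply/eqP; apply: contraTT (Hi (opener i) _); last first.
  by rewrite mem_opener_block opener_idem.
by case/openerP; rewrite -ltnNge.
Qed.

Lemma is_closing_opener_partition (i : 'I_n) :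
  is_closing opener_partition i = (c i == Close).
Proof.
apply/forall_inP/eqP => [Hi|Ci j]; last first.
  rewrite mem_opener_block => /eqP Eij; rewrite leqNgt; apply/negP => ij.
  have Hi : c i != Open by rewrite Ci.
  have [oi _ _] := openerP Hi.
  have Hj : c j != Open by apply: opener_lt_notOpen; rewrite -Eij; lia.
  have := opener_level_lt Hj (k := i.+1); rewrite -Eij => /(_ (ltnW oi) ij).
  have [_ Li] := opener_kind Hi; have := levelS i; rewrite Ci /=; lia.
apply/eqP; apply: contraT => /exists_later_same_opener [j ij Ej].
by have := Hi j; rewrite mem_opener_block Ej eqxx leqNgt ij => /(_ isT).
Qed.

Lemma block_kind_opener_partition (i : 'I_n) : block_kind opener_partition i = c i.
Proof.
rewrite /block_kind is_opening_opener_partition is_closing_opener_partition.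
by case: (c i).
Qed.

Lemma opener_partition_no_singleton : no_singleton opener_partition.
Proof.
have /and3P [_ tI n0] := opener_partitionP.
apply/forall_inP => A PA.
have /set0Pn [x xA] : A != set0 by apply: contraNneq n0 => <-.
rewrite -(def_pblock tI PA xA); apply/card_gt1P.
have [Cx|/exists_later_same_opener [j xj Ej]] := eqVneq (c x) Close.
  have Hx : c x != Open by rewrite Cx.
  have [ox _ _] := openerP Hx.
  exists x, (opener x); rewrite !mem_opener_block opener_idem eqxx.
  by split=> //; rewrite neq_ltn ox orbT.
exists x, j; rewrite !mem_opener_block Ej eqxx.
by split=> //; rewrite neq_ltn xj.
Qed.

Lemma opener_noncrossing (a b x y : 'I_n) : a < b -> b < x -> x < y ->
  opener a = opener x -> opener b = opener y -> opener a = opener b.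
Proof.
move=> ab bx xy Ex Ey; have oa := opener_le a; have ob := opener_le b.
have Hx : c x != Open by apply: opener_lt_notOpen; rewrite -Ex; lia.
have Hy : c y != Open by apply: opener_lt_notOpen; rewrite -Ey; lia.
have [_ Lx] := opener_kind Hx; rewrite -Ex in Lx.
apply: val_inj; case: (ltngtP (opener a) (opener b)) => [lt|lt|//].
  have := opener_level_lt Hx (k := opener b); have := opener_level_lt Hy (k := x).
  by rewrite -Ex -Ey; lia.
have Hb : c b != Open by apply: opener_lt_notOpen; lia.
have [_ Lb] := opener_kind Hb.
have := opener_level_lt Hy (k := opener a); have := opener_level_lt Hx (k := b).
by rewrite -Ex -Ey; lia.
Qed.

Lemma opener_partition_noncrossing : noncrossing opener_partition.
Proof.
have /and3P [_ tI _] := opener_partitionP.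
apply/forall_inP => A PA; apply/forall_inP => A' PA'; apply/implyP => neqA.
apply/negP => /existsP [a /existsP [b /existsP [x /existsP [y]]]].
case/and4P => ab bx xy /and4P [aA xA bA' yA'].
have blockA : pblock opener_partition a = A by exact: def_pblock.
have blockA' : pblock opener_partition b = A' by exact: def_pblock.
move: xA yA'; rewrite -blockA -blockA' !mem_opener_block => /eqP Ex /eqP Ey.
move/eqP: neqA; apply; rewrite -blockA -blockA'.
by apply/setP => z; rewrite !mem_opener_block (opener_noncrossing ab bx xy Ex Ey).
Qed.

Lemma opener_partition_NCns : is_NCns opener_partition.
Proof.
rewrite /is_NCns /is_NC opener_partitionP opener_partition_noncrossing.
exact: opener_partition_no_singleton.
Qed.

End VacuumPathPartition.

Definition same_block n (P : {set {set 'I_n}}) (i j : 'I_n) : bool :=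
  pblock P i == pblock P j.

Lemma block_kind_Open n (P : {set {set 'I_n}}) (i : 'I_n) :
  (block_kind P i == Open) = is_opening P i.
Proof. by rewrite /block_kind; case: (is_opening P i); case: (is_closing P i). Qed.

Section NoncrossingBlocks.

Variables (n : nat) (P : {set {set 'I_n}}).
Hypothesis P_NCns : is_NCns P.

Lemma NCns_partition : partition P [set: 'I_n].
Proof. by case/andP: P_NCns => /andP []. Qed.

Lemma NCns_cover (x : 'I_n) : x \in cover P.
Proof. by have /and3P [/eqP -> _ _] := NCns_partition; rewrite inE. Qed.

Lemma in_pblockE (i j : 'I_n) : (j \in pblock P i) = same_block P i j.
Proof. by rewrite /same_block eq_pblock ?NCns_cover //; case/and3P: NCns_partition. Qed.

Lemma NCns_not_opening_closing (i : 'I_n) : ~~ (is_opening P i && is_closing P i).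
Proof.
apply/andP => [[/forall_inP opens /forall_inP closes]].
have /forall_inP /(_ _ (pblock_mem (NCns_cover i))) := (andP P_NCns).2.
move=> /card_gt1P [x [y [xi yi /eqP[]]]]; apply: val_inj => /=.
by have := opens x xi; have := closes x xi; have := opens y yi; have := closes y yi; lia.
Qed.

Lemma block_kind_Close (i : 'I_n) : (block_kind P i == Close) = is_closing P i.
Proof.
have := NCns_not_opening_closing i; rewrite /block_kind.
by case: (is_opening P i); case: (is_closing P i).
Qed.

Lemma noncrossing_same_block (a b c d : 'I_n) : a < b -> b < c -> c < d ->
  same_block P a c -> same_block P b d -> same_block P a b.
Proof.
move=> ab bc cd ac bd; apply: contraT => nab.
have /forall_inP /(_ _ (pblock_mem (NCns_cover a))) := (andP (andP P_NCns).1).2.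
move=> /forall_inP /(_ _ (pblock_mem (NCns_cover b))) /implyP /(_ nab) /negP[].
apply/existsP; exists a; apply/existsP; exists b; apply/existsP; exists c.
by apply/existsP; exists d; rewrite ab bc cd !in_pblockE ac bd /same_block !eqxx.
Qed.

End NoncrossingBlocks.

Section BlockKindInjective.

Variables (n : nat) (P Q : {set {set 'I_n}}).
Hypotheses (P_NCns : is_NCns P) (Q_NCns : is_NCns Q).
Hypothesis PQ_kind : block_kind P =1 block_kind Q.

(* Induction step on j - i.  If the P-block of i meets ]i, j[, go through
   that point; otherwise i is not closing and j is not opening, and the
   Q-blocks of i and j would cross. *)
Lemma same_block_transfer (i j : 'I_n) : i < j ->
    (forall i' j' : 'I_n, i' < j' -> j' - i' < j - i ->
       same_block P i' j' = same_block Q i' j') ->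
  same_block P i j -> same_block Q i j.
Proof.
move=> ij IH Pij.
have [/existsP [k /and3P [ik kj Pik]]|no_between] :=
  boolP [exists k : 'I_n, [&& i < k, k < j & same_block P i k]].
  have Qik : same_block Q i k by rewrite -IH //; lia.
  have Pkj : same_block P k j by rewrite /same_block -(eqP Pik).
  have Qkj : same_block Q k j by rewrite -IH //; lia.
  by rewrite /same_block (eqP Qik).
apply: contraNT no_between => nQij.
have : ~~ is_closing Q i.
  rewrite -block_kind_Close // -PQ_kind block_kind_Close //.
  by apply/forall_inPn; exists j; rewrite ?in_pblockE // -ltnNge.
move=> /forall_inPn [s]; rewrite in_pblockE // -ltnNge => Qis is_.
have : ~~ is_opening Q j.
  rewrite -block_kind_Open -PQ_kind block_kind_Open.
  apply/forall_inPn; exists i; last by rewrite -ltnNge.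
  by rewrite in_pblockE // /same_block eq_sym.
move=> /forall_inPn [r]; rewrite in_pblockE // -ltnNge => Qjr rj.
have Qrj : same_block Q r j by rewrite /same_block eq_sym.
case: (ltngtP s j) => [sj|js|/val_inj sj]; last by rewrite -sj Qis in nQij.
  by apply/existsP; exists s; rewrite is_ sj IH //; lia.
case: (ltngtP r i) => [ri|ir|/val_inj ri]; last by rewrite -ri Qrj in nQij.
  have /eqP Qri := noncrossing_same_block Q_NCns ri ij js Qrj Qis.
  by rewrite /same_block -Qri (eqP Qrj) eqxx in nQij.
have Prj : same_block P r j by rewrite IH //; lia.
by apply/existsP; exists r; rewrite ir rj /same_block (eqP Pij) eq_sym.
Qed.

End BlockKindInjective.

Lemma NCns_block_kind_inj n (P Q : {set {set 'I_n}}) :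
  is_NCns P -> is_NCns Q -> block_kind P =1 block_kind Q -> P = Q.
Proof.
move=> HP HQ PQ_kind.
have gap_ind g (i j : 'I_n) : i < j -> j - i <= g -> same_block P i j = same_block Q i j.
  elim: g i j => [|g IH] i j ij gap; first lia.
  apply/idP/idP; apply: same_block_transfer => // i' j' ij' gap'.
    by apply: IH; lia.
  by symmetry; apply: IH; lia.
have same_PQ (i j : 'I_n) : same_block P i j = same_block Q i j.
  case: (ltngtP i j) => [ij|ji|/val_inj ->]; first exact: gap_ind ij (leqnn _).
    by rewrite /same_block eq_sym [RHS]eq_sym; exact: gap_ind ji (leqnn _).
  by rewrite /same_block !eqxx.
rewrite -(preim_partition_pblock (NCns_partition HP)).
rewrite -(preim_partition_pblock (NCns_partition HQ)).
by apply: eq_imset => x; apply/setP => y; rewrite !inE; exact: same_PQ.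
Qed.

(* The [vacuum_path] condition on the right always holds, but proving it is
   unnecessary: other partitions contribute nothing to vacuum expectations. *)
Lemma sum_vacuum_paths (R : nmodType) n (F : {ffun 'I_n -> kind} -> R) :
  (\sum_(c : {ffun 'I_n -> kind} | vacuum_path (map c (enum 'I_n))) F c =
   \sum_(P | is_NCns P && vacuum_path (map (block_kind P) (enum 'I_n)))
     F (finfun (block_kind P)))%R.
Proof.
rewrite (reindex_onto (fun P => finfun (block_kind P)) (@opener_partition n)) /=.
  apply: eq_bigl => P.
  have Emap : map (finfun (block_kind P)) (enum 'I_n) = map (block_kind P) (enum 'I_n).
    by apply: eq_map => i; rewrite ffunE.
  rewrite Emap andbC; have [Hv|] := boolP (vacuum_path _); rewrite ?andbT ?andbF //.
  have Hv' : vacuum_path (map (finfun (block_kind P)) (enum 'I_n)) by rewrite Emap.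
  apply/eqP/idP => [<-|HP]; first exact: opener_partition_NCns.
  apply: NCns_block_kind_inj => //; first exact: opener_partition_NCns.
  by move=> i; rewrite block_kind_opener_partition // ffunE.
by move=> c Hc; apply/ffunP => i; rewrite ffunE block_kind_opener_partition.
Qed.

Local Open Scope ring_scope.

Lemma sum_ffunS (R : nmodType) (T : finType) n (F : T -> {ffun 'I_n -> T} -> R) :
  \sum_(c : {ffun 'I_n.+1 -> T}) F (c ord0) [ffun i => c (lift ord0 i)] =
  \sum_(t : T) \sum_(c : {ffun 'I_n -> T}) F t c.
Proof.
rewrite pair_big /=.
pose cons_ffun (p : T * {ffun 'I_n -> T}) : {ffun 'I_n.+1 -> T} :=
  [ffun i => if unlift ord0 i is Some j then p.2 j else p.1].
rewrite (reindex cons_ffun) /=.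
  apply: eq_bigr => -[t c] _; rewrite ffunE unlift_none; congr F.
  by apply/ffunP => j; rewrite !ffunE liftK.
exists (fun c => (c ord0, [ffun i => c (lift ord0 i)])) => [[t c] _|c _].
  rewrite ffunE unlift_none; congr (_, _).
  by apply/ffunP => j; rewrite !ffunE liftK.
by apply/ffunP => i; rewrite ffunE; case: unliftP => [j ->|->]; rewrite ?ffunE.
Qed.

Section VacuumExpectation.

Variables (B : algType CC) (gamma : B -> B) (phi : B -> CC) (Lam : B -> B -> B).

Definition fv_eval (L : seq B -> CC) (xi : fvec B) : CC := \sum_(p <- xi) p.1 * L p.2.

Lemma fv_eval_cat L xi eta : fv_eval L (xi ++ eta) = fv_eval L xi + fv_eval L eta.
Proof. by rewrite /fv_eval big_cat. Qed.

Lemma fv_eval_lin_ext L op xi :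
  fv_eval L (lin_ext op xi) = fv_eval (fun w => fv_eval L (op w)) xi.
Proof.
rewrite /fv_eval /lin_ext big_flatten big_map; apply: eq_bigr => p _.
by rewrite big_map mulr_sumr; apply: eq_bigr => q _; rewrite mulrA.
Qed.

Lemma fv_eval_sum (I : finType) (L : I -> seq B -> CC) xi :
  fv_eval (fun w => \sum_i L i w) xi = \sum_i fv_eval (L i) xi.
Proof. by rewrite /fv_eval exchange_big; apply: eq_bigr => p _; rewrite mulr_sumr. Qed.

Definition vacuum_coef (w : seq B) : CC := if w is [::] then 1 else 0.

Lemma fock_form_Omega star xi :
  fock_form star gamma phi xi Omega = fv_eval vacuum_coef xi.
Proof.
rewrite /fock_form /fv_eval; apply: eq_bigr => -[k w] _.
by rewrite big_seq1 conjc1 mulr1; case: w.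
Qed.

Definition kind_op (k : kind) (b : B) : seq B -> fvec B :=
  match k with
  | Open => aminus gamma phi b
  | Close => aplus b
  | Middle => azero Lam b
  end.

Lemma fv_eval_Xop L b w :
  fv_eval L (Xop gamma phi Lam b w) = \sum_k fv_eval L (kind_op k b w).
Proof. by rewrite /Xop !fv_eval_cat sum_kind /= addrCA addrA. Qed.

Definition Wops (ts : seq (kind * B)) : fvec B :=
  foldr (fun t xi => lin_ext (kind_op t.1 t.2) xi) Omega ts.

Definition Wkinds n (c : 'I_n -> kind) (u : 'I_n -> B) : fvec B :=
  Wops [seq (c i, u i) | i <- enum 'I_n].

Lemma Wkinds_ext n (c c' : 'I_n -> kind) u : c =1 c' -> Wkinds c u = Wkinds c' u.
Proof. by move=> E; rewrite /Wkinds (eq_map (fun i => congr1 (pair^~ _) (E i))). Qed.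

Lemma WM_Omega_Wkinds n (P : {set {set 'I_n}}) u :
  WM_Omega gamma phi Lam P u = Wkinds (block_kind P) u.
Proof.
rewrite /WM_Omega /Wkinds /Wops foldr_map; elim: (enum 'I_n) => //= i s ->.
by rewrite /block_kind; case: (is_opening P i); case: (is_closing P i).
Qed.

Lemma eq_fv_eval L L' xi : L =1 L' -> fv_eval L xi = fv_eval L' xi.
Proof. by move=> E; apply: eq_bigr => p _; rewrite E. Qed.

Lemma Xprod_expand n (u : 'I_n -> B) L :
  fv_eval L (Xprod gamma phi Lam u) =
  \sum_(c : {ffun 'I_n -> kind}) fv_eval L (Wkinds c u).
Proof.
elim: n u L => [|n IH] u L.
  rewrite (big_pred1 [ffun => Open]); first by rewrite /Xprod /Wkinds enum_ord0.
  by move=> c; symmetry; apply/eqP/ffunP => -[].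
rewrite /Xprod enum_ordSl /= foldr_map -/(Xprod gamma phi Lam (u \o lift ord0)).
rewrite fv_eval_lin_ext (eq_fv_eval _ (fv_eval_Xop L (u ord0))) fv_eval_sum.
rewrite (eq_bigr _ (fun k _ => IH (u \o lift ord0) _)).
rewrite -(sum_ffunS (fun k c =>
  fv_eval (fun w => fv_eval L (kind_op k (u ord0) w)) (Wkinds c (u \o lift ord0)))).
apply: eq_bigr => c _.
rewrite /Wkinds /Wops enum_ordSl /= fv_eval_lin_ext -map_comp; congr fv_eval.
by congr foldr; apply: eq_map => i /=; rewrite ffunE.
Qed.

Lemma Wops_words ts w : w \in Wops ts ->
  admissible (map fst ts) /\ (size w.2)%:Z = depth (map fst ts).
Proof.
elim: ts w => [|[k b] ts IH] w /=; first by rewrite inE => /eqP ->.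
move=> /flattenP [_ /mapP [[a v] /IH [adm Hv] ->]] /mapP [[a' v'] Hw ->] /=.
rewrite /= in Hv; rewrite adm; case: k Hw => /=.
- by case: v Hv => [|u1 [|u2 v]] //= Hv; rewrite inE => /eqP [_ ->] /=; lia.
- by rewrite inE => /eqP [_ ->] /=; split=> //; lia.
- by case: v Hv => [|u1 v] //= Hv; rewrite inE => /eqP [_ ->] /=; lia.
Qed.

Lemma vacuum_Wkinds_eq0 n (c : 'I_n -> kind) u :
  ~~ vacuum_path (map c (enum 'I_n)) -> fv_eval vacuum_coef (Wkinds c u) = 0.
Proof.
move=> Hc; rewrite /fv_eval big_seq big1 // => -[k [|x w]] /Wops_words /=; last by rewrite mulr0.
by rewrite -map_comp => -[adm Hw]; move: Hc; rewrite /vacuum_path adm -Hw.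
Qed.

Lemma fock_form_X_Omega star b :
  fock_form star gamma phi (lin_ext (Xop gamma phi Lam b) Omega) Omega = 0.
Proof. by rewrite fock_form_Omega /fv_eval /= big_seq1 /= mulr0. Qed.

End VacuumExpectation.

Theorem proposition3p2
  (B : algType CC) (star : B -> B) (phi : B -> CC) (gamma : B -> B)
  (Lam : B -> B -> B)
  (Hstar : is_star star)
  (Hphi : star_linear_functional star phi)
  (Hgamma : star_linear_map star gamma)
  (HLam : star_bilinear_map star Lam)
  (Hphi_pos : positive_functional star phi)
  (Hphi_faithful : faithful_functional star phi)
  (Hcp : completely_positive star (gpp gamma phi))
  (HphiLam : forall b u v : B,
     phi (star v * Lam b u) = phi (star (Lam (star b) v) * u))
  (HgammaLam : forall b u v : B,
     gamma (star v * Lam b u) = gamma (star (Lam (star b) v) * u)) :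
  (forall (n : nat) (u : 'I_n -> B), (2 <= n)%N ->
     fock_form star gamma phi (Xprod gamma phi Lam u) Omega
     = \sum_(P : {set {set 'I_n}} | is_NCns P)
         fock_form star gamma phi (WM_Omega gamma phi Lam P u) Omega)
  /\
  (forall u1 : B,
     fock_form star gamma phi (lin_ext (Xop gamma phi Lam u1) Omega) Omega = 0).
Proof.
split=> [n u _|u1]; last exact: fock_form_X_Omega.
rewrite fock_form_Omega Xprod_expand.
rewrite (bigID (fun c : {ffun 'I_n -> kind} => vacuum_path (map c (enum 'I_n)))) /=.
rewrite [X in _ + X]big1 ?addr0 => [|c]; last exact: vacuum_Wkinds_eq0.
rewrite sum_vacuum_paths.
rewrite [RHS](bigID (fun P => vacuum_path (map (block_kind P) (enum 'I_n)))) /=.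
rewrite [X in _ = _ + X]big1 ?addr0 => [|P /andP [_ not_vacuum]]; last first.
  by rewrite fock_form_Omega WM_Omega_Wkinds vacuum_Wkinds_eq0.
apply: eq_bigr => P _; rewrite fock_form_Omega WM_Omega_Wkinds.
by congr fv_eval; apply: Wkinds_ext => i; rewrite ffunE.
Qed.
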